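(* Let $k\geq1$ and $n\geq 2k$. Let $\mathcal{S}$ be an antichain of $\mathcal{F}=\mathcal{F}_{2k}^{[1,n]}$ that contains the set $[1,2]\cup[n-2k+3,n]$. Then $B_{\mathcal{S}}$ has exactly $\binom{n-k-1}{k-1}$ facets. Equivalently, in the poset $\mathcal{P}=\{(x_1,\dots,x_k): 1\leq x_1<\dots<x_k\leq n-k\}\subseteq\mathbb{N}^k$ (ordered componentwise), if $\mathcal{A}$ is an antichain containing $G=(1,n-2k+2,n-2k+3,\dots,n-k)$, then $|\mathcal{P}(\mathcal{A})\setminus\mathcal{P}(\mathcal{A}-\mathbf{1}_k)|=|\mathcal{P}(\{G\})|=\binom{n-k-1}{k-1}$.
   Context: Notation: $[m,n]=\{m,\dots,n\}$; $2k$-subsets of $[n]$ are identified with increasing vectors, and $\leq_p$ is the componentwise order. $\mathcal{F}_{2k}^{[1,n]}$ is the set of sets $\{i_1,i_1+1,\dots,i_k,i_k+1\}$ with $1\leq i_1$, $i_k\leq n-1$, $i_j\leq i_{j+1}-2$, ordered by $\leq_p$. $\mathcal{F}(\mathcal{S})$ is the order ideal generated by an antichain $\mathcal{S}$, $B(\mathcal{S})$ the pure complex whose facets are the sets of $\mathcal{F}(\mathcal{S})$, $\mathcal{S}-\mathbf{1}_{2k}=\{x-\mathbf{1}_{2k}: x\in\mathcal{S},\min x>1\}$, and $B_{\mathcal{S}}$ is the complex generated by the facets of $B(\mathcal{S})$ that are not facets of $B(\mathcal{S}-\mathbf{1}_{2k})$. Similarly, for an antichain $\mathcal{A}$ of $\mathcal{P}$,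 $\mathcal{P}(\mathcal{A})$ is the order ideal it generates and $\mathcal{A}-\mathbf{1}_k=\{x-\mathbf{1}_k: x\in\mathcal{A}, x_1>1\}$. The two formulations correspond under the poset isomorphism $R:\mathcal{P}\to\mathcal{F}$, $(x_1,\dots,x_k)\mapsto\{x_1,x_1+1,x_2+1,x_2+2,\dots,x_k+k-1,x_k+k\}$. *)

From mathcomp Require Import all_boot.
Set Implicit Arguments. Unset Strict Implicit. Unset Printing Implicit Defensive.

(* Subsets of [1,n] are represented by strictly increasing sequences of nats. *)

(* componentwise order <=_p on increasing vectors (forces equal length) *)
Definition lep (x y : seq nat) : bool := all2 leq x y.

Definition has_card (P : seq nat -> Prop) (N : nat) : Prop :=
  exists l : seq (seq nat), uniq l /\ (forall x, x \in l <-> P x) /\ size l = N.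

Definition pairs_of (s : seq nat) : seq nat :=
  flatten [seq [:: i; i.+1] | i <- s].

Definition inF (n k : nat) (x : seq nat) : Prop :=
  exists s : seq nat, [/\ size s = k, sorted (fun a b => a.+1 < b) s,
                          all (fun i => 0 < i < n) s & x = pairs_of s].

Definition antichainF (n k : nat) (S : seq (seq nat)) : Prop :=
  (forall x, x \in S -> inF n k x) /\
  (forall x y, x \in S -> y \in S -> lep x y -> x = y).

Definition idealF (n k : nat) (S : seq (seq nat)) (x : seq nat) : Prop :=
  inF n k x /\ exists2 y, y \in S & lep x y.

Definition shift1 (S : seq (seq nat)) : seq (seq nat) :=
  [seq map predn x | x <- S & 1 < head 0 x].

(* generating facets of B_S: facets of B(S) (= sets of F(S)) that are not
   facets of B(S - 1_{2k}) (= sets of F(S - 1_{2k})) *)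
Definition genBS (n k : nat) (S : seq (seq nat)) (x : seq nat) : Prop :=
  idealF n k S x /\ ~ idealF n k (shift1 S) x.

(* faces of B_S: subsets of generating facets *)
Definition faceBS (n k : nat) (S : seq (seq nat)) (f : seq nat) : Prop :=
  sorted ltn f /\ exists x, genBS n k S x /\ subseq f x.

Definition facetBS (n k : nat) (S : seq (seq nat)) (f : seq nat) : Prop :=
  faceBS n k S f /\ forall g, faceBS n k S g -> subseq f g -> g = f.

Definition inP (n k : nat) (x : seq nat) : Prop :=
  [/\ size x = k, sorted ltn x & all (fun i => 0 < i <= n - k) x].

Definition antichainP (n k : nat) (A : seq (seq nat)) : Prop :=
  (forall x, x \in A -> inP n k x) /\
  (forall x y, x \in A -> y \in A -> lep x y -> x = y).

Definition idealP (n k : nat) (A : seq (seq nat)) (x : seq nat) : Prop :=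
  inP n k x /\ exists2 y, y \in A & lep x y.

Definition topF (n k : nat) : seq nat := [:: 1; 2] ++ iota (n - 2 * k + 3) (2 * k - 2).
Definition Gvec (n k : nat) : seq nat := 1 :: iota (n - 2 * k + 2) (k - 1).

From Stdlib Require Import Classical Lia.
From mathcomp Require Import all_boot zify.
Set Implicit Arguments. Unset Strict Implicit. Unset Printing Implicit Defensive.

(* Both halves of Lemma 3.13 are instances of one counting principle.
   Let U be a family of strictly increasing vectors of a fixed length with
   entries in [1, M] that is stable under translation (x |-> x + 1 while the
   entries stay <= M, x |-> x - t while they stay >= 1), and whose members
   with first entry 1 all lie below a fixed top vector T.  Let A be a subset
   of U containing T and I the ideal it generates in U.  Then
   x \in U(A - 1) <-> x + 1 \in I, so the set to be counted is the set of
   "exit points" {x \in I | x + 1 \notin I}.  Every x \in U is uniquely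
   y + t with y \in U starting at 1; along each such orbit y, y + 1, ... the
   ideal I is an initial segment that contains y (as y <= T) and is finite,
   so every orbit has exactly one exit point.  Hence the count equals the
   number of members of U starting at 1 (section OrbitCount and
   TranslationFamily).  For U = P these are 1 :: s with s a (k-1)-subset of
   [2, n-k], counted by an explicit enumeration; for U = F they correspond
   to those of P under the paper's isomorphism R.  Finally the complex B_S
   is pure, so its facets are exactly its generating facets. *)

Lemma has_card_ext (P Q : seq nat -> Prop) N :
  (forall x, P x <-> Q x) -> has_card P N -> has_card Q N.
Proof.
move=> PQ [l [ul [ml sl]]]; exists l; split=> //; split=> // x.
by rewrite ml; exact: PQ.
Qed.

(* A relation R that is a bijection between P and Q preserves cardinality;
   the images of an enumeration of P are chosen one at a time, so no choice
   principle is needed. *)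
Lemma has_card_rel (P Q : seq nat -> Prop) (R : seq nat -> seq nat -> Prop) N :
  (forall x, P x -> exists2 y, Q y & R x y) ->
  (forall x y y', P x -> R x y -> R x y' -> y = y') ->
  (forall x x' y, P x -> P x' -> R x y -> R x' y -> x = x') ->
  (forall y, Q y -> exists2 x, P x & R x y) ->
  has_card P N -> has_card Q N.
Proof.
move=> total functional injective surjective [l [ul [ml <-]]].
have image : forall l0 : seq (seq nat), uniq l0 -> (forall x, x \in l0 -> P x) ->
    exists l', [/\ uniq l', size l' = size l0 &
                   forall y, y \in l' <-> exists2 x, x \in l0 & R x y].
  elim=> [|x l0 IH] /=.
    by move=> _ _; exists [::]; split=> // y; split=> // -[].
  case/andP=> xl0 ul0 Pl0.
  have Pl0' : forall z, z \in l0 -> P z by move=> z zl; apply: Pl0; rewrite in_cons zl orbT.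
  have [l' [ul' sl' ml']] := IH ul0 Pl0'.
  have Px := Pl0 x (mem_head _ _).
  have [y Qy Rxy] := total x Px.
  exists (y :: l'); split=> /=; last 1 first.
  - move=> z; rewrite in_cons; split.
    + case/orP=> [/eqP-> | /ml' [x' x'l Rx'z]]; first by exists x; rewrite ?mem_head.
      by exists x' => //; rewrite in_cons x'l orbT.
    + case=> x'; rewrite in_cons => /orP[/eqP-> Rxz | x'l Rx'z].
        by rewrite (functional x z y Px Rxz Rxy) eqxx.
      by apply/orP; right; apply/ml'; exists x'.
  - rewrite ul' andbT; apply/negP => /ml' [x' x'l Rx'y].
    have Px' := Pl0' x' x'l.
    by move: xl0; rewrite (injective x x' y Px Px' Rxy Rx'y) x'l.
  - by rewrite sl'.
have [l' [ul' sl' ml']] := image l ul (fun x xl => proj1 (ml x) xl).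
exists l'; split=> //; split=> // y; rewrite ml'; split.
- case=> x /ml Px Rxy; have [y' Qy' Rxy'] := total x Px.
  by rewrite (functional x y y' Px Rxy Rxy').
- by move=> Qy; have [x Px Rxy] := surjective y Qy; exists x => //; exact/ml.
Qed.

(* I is a set of points partitioned into s-orbits starting in a base B; on
   each orbit I is a finite initial segment, so it has one exit point. *)
Section OrbitCount.

Variables (s : seq nat -> seq nat) (B I : seq nat -> Prop).
Hypothesis base_in : forall y, B y -> I y.
Hypothesis orbit_leaves : forall y, B y -> exists t, ~ I (iter t s y).
Hypothesis orbit_down : forall y t, B y -> I (iter t.+1 s y) -> I (iter t s y).
Hypothesis orbit_cover : forall z, I z -> exists2 y, B y & exists t, z = iter t s y.
Hypothesis orbit_uniq : forall y y' t t',
  B y -> B y' -> iter t s y = iter t' s y' -> y = y' /\ t = t'.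

Definition exit_at (y : seq nat) (t : nat) : Prop :=
  I (iter t s y) /\ ~ I (iter t.+1 s y).

Lemma orbit_down_le y t t' : B y -> t <= t' -> I (iter t' s y) -> I (iter t s y).
Proof.
move=> By; elim: t' => [|t' IH]; first by rewrite leqn0 => /eqP->.
rewrite leq_eqVlt => /orP[/eqP-> // | ]; rewrite ltnS => le It'.
by apply: IH le _; exact: orbit_down.
Qed.

(* an orbit that starts in I and leaves it has an exit point (classically,
   since I is an arbitrary proposition) *)
Lemma exit_exists y : B y -> exists t, exit_at y t.
Proof.
move=> By; have [m notIm] := orbit_leaves By.
have I0 : I (iter 0 s y) by exact: base_in.
elim: m notIm => [|m IH] notIm; first by [].
by case: (classic (I (iter m s y))) => Im; [exists m | exact: IH].
Qed.

(* by the initial-segment property an orbit has at most one exit point *)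
Lemma exit_unique y t t' : B y -> exit_at y t -> exit_at y t' -> t = t'.
Proof.
move=> By [It nIt] [It' nIt']; case: (ltngtP t t') => // lt.
- by case: nIt; apply: orbit_down_le It'.
- by case: nIt'; apply: orbit_down_le It.
Qed.

Lemma orbit_count N : has_card B N -> has_card (fun z => I z /\ ~ I (s z)) N.
Proof.
apply: (has_card_rel (R := fun y z => exists2 t, exit_at y t & z = iter t s y)).
- by move=> y By; have [t ex] := exit_exists By; exists (iter t s y) => //; exists t.
- by move=> y z z' By [t ex ->] [t' ex' ->]; rewrite (exit_unique By ex ex').
- by move=> y y' z By By' [t _ ->] [t' _ /esym/orbit_uniq] [] // ->.
- move=> z [Iz nIz]; have [y By [t ez]] := orbit_cover Iz.
  by exists y => //; exists t => //; split; rewrite /= -ez.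
Qed.

End OrbitCount.

Lemma lep_trans x y z : lep x y -> lep y z -> lep x z.
Proof.
rewrite /lep; elim: x y z => [|a x IH] [|b y] [|c z] //= /andP[ab xy] /andP[bc yz].
by rewrite (leq_trans ab bc); exact: IH xy yz.
Qed.

Lemma lep_head x y : lep x y -> head 0 x <= head 0 y.
Proof. by rewrite /lep; case: x y => [|a x] [|b y] //= /andP[]. Qed.

Lemma lep_bound M x y : lep x y -> all (fun i => i <= M) y -> all (fun i => i <= M) x.
Proof.
rewrite /lep; elim: x y => [|a x IH] [|b y] //= /andP[ab xy] /andP[bM yM].
by rewrite (leq_trans ab bM); exact: IH xy yM.
Qed.

Lemma lep_succ_pred x a : all (fun i => 0 < i) a -> lep (map S x) a = lep x (map predn a).
Proof.
rewrite /lep; elim: x a => [|u x IH] [|b a] //= /andP[b0 a0].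
by rewrite IH //; congr andb; lia.
Qed.

Lemma iter_mapS t y : iter t (map S) y = map (addn t) y.
Proof.
elim: t => [|t IH]; first by rewrite /= (eq_map add0n) map_id.
by rewrite iterS IH -map_comp; apply: eq_map => a /=; rewrite addSn.
Qed.

Lemma lep_translate t y : lep (map (addn t) y) (map (addn t.+1) y).
Proof. by rewrite /lep; elim: y => //= a y ->; rewrite addSn leqnSn. Qed.

Lemma head_min (s : seq nat) : sorted ltn s -> all (fun i => head 0 s <= i) s.
Proof.
case: s => //= a s /(order_path_min ltn_trans) h; rewrite leqnn /=.
by apply: sub_all h => i; exact: ltnW.
Qed.

Lemma translate_back t (z : seq nat) :
  all (fun i => t <= i) z -> map (addn t) (map (subn^~ t) z) = z.
Proof. by elim: z => //= a z IH /andP[ta hz]; rewrite subnKC // IH. Qed.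

(* U: strictly increasing vectors of length m > 0 with entries in [1, M],
   stable under the translations that stay in range, with every member
   starting at 1 below T; A: any subset of U containing T. *)
Section TranslationFamily.

Variables (U : seq nat -> Prop) (m M : nat) (T : seq nat) (A : seq (seq nat)).
Hypothesis m_gt0 : 0 < m.
Hypothesis U_shape : forall x, U x ->
  [/\ size x = m, sorted ltn x & all (fun i => 0 < i <= M) x].
Hypothesis U_up : forall z, U z -> all (fun i => i < M) z -> U (map S z).
Hypothesis U_down : forall z t, U z -> t < head 0 z -> U (map (subn^~ t) z).
Hypothesis U_top : forall y, U y -> head 0 y = 1 -> lep y T.
Hypothesis A_sub : forall a, a \in A -> U a.
Hypothesis T_in : T \in A.

Definition ideal (A' : seq (seq nat)) (x : seq nat) : Prop :=
  U x /\ exists2 y, y \in A' & lep x y.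

Lemma U_head x : U x -> 0 < head 0 x <= M.
Proof.
by case/U_shape; case: x => [|a x] /= ? //; [lia | move=> _ /andP[]].
Qed.

Lemma ideal_shift1 x : U x -> ideal (shift1 A) x <-> ideal A (map S x).
Proof.
move=> Ux; have hx := U_head Ux; split.
- case=> _ [y /mapP [a]]; rewrite mem_filter => /andP[_ aA] ->.
  have [_ _ ba] := U_shape (A_sub aA).
  have aM : all (fun i => i <= M) a by apply: sub_all ba => i /andP[].
  rewrite -lep_succ_pred; last by apply: sub_all ba => i /andP[].
  move=> le; split; last by exists a.
  by apply: U_up Ux _; have := lep_bound le aM; rewrite all_map.
- case=> _ [a aA le]; split=> //; exists (map predn a).
    apply/mapP; exists a => //; rewrite mem_filter aA andbT.
    have := lep_head le; case: x {Ux le} hx => [|u x] /=; lia.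
  have [_ _ ba] := U_shape (A_sub aA).
  by rewrite -lep_succ_pred //; apply: sub_all ba => i /andP[].
Qed.

(* the members of U starting at 1: one on every translation orbit *)
Definition base (y : seq nat) : Prop := U y /\ head 0 y = 1.

Lemma head_translate y t : base y -> head 0 (map (addn t) y) = t.+1.
Proof.
by case=> _; case: y => [|u y] //= ->; rewrite addn1.
Qed.

Lemma count_generating N : has_card base N ->
  has_card (fun x => ideal A x /\ ~ ideal (shift1 A) x) N.
Proof.
move=> hc; apply: (has_card_ext _ (orbit_count (s := map S) (B := base) (I := ideal A)
  _ _ _ _ _ hc)).
- move=> x; split=> -[Ix nIx]; split=> //; have [to from] := ideal_shift1 Ix.1.
  + by move/to.
  + by move/from.
- by move=> y [Uy hy]; split=> //; exists T => //; exact: U_top.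
- move=> y By; exists M; rewrite iter_mapS => -[UyM _].
  by have := U_head UyM; rewrite head_translate //; lia.
- move=> y t By; rewrite !iter_mapS => -[Uyt [a aA le]].
  split; last by exists a => //; apply: lep_trans (lep_translate t y) le.
  have -> : map (addn t) y = map (subn^~ 1) (map (addn t.+1) y).
    by rewrite -map_comp; apply: eq_map => v /=; lia.
  by apply: U_down Uyt _; rewrite head_translate.
- move=> z [Uz _]; have [_ srt _] := U_shape Uz; have hz := U_head Uz.
  pose t := (head 0 z).-1.
  have ge_t : all (fun i => t <= i) z by apply: sub_all (head_min srt) => i; lia.
  exists (map (subn^~ t) z); last by exists t; rewrite iter_mapS translate_back.
  split; first by apply: U_down Uz _; lia.
  by move: hz; rewrite /t; case: (z) => [|u z'] /=; lia.
- move=> y y' t t' By By'; rewrite !iter_mapS => e.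
  have ett : t = t' by have := congr1 (head 0) e; rewrite !head_translate // => -[].
  by subst t'; move/(inj_map (@addnI t)): e.
Qed.

End TranslationFamily.

(* incs len m a enumerates the strictly increasing sequences of length m with
   entries in [a, a + len); there are 'C(len, m) of them. *)
Fixpoint incs (len m a : nat) {struct len} : seq (seq nat) :=
  if len is len'.+1 then
    (if m is m'.+1 then [seq a :: s | s <- incs len' m' a.+1] ++ incs len' m a.+1
     else [:: [::]])
  else (if m is 0 then [:: [::]] else [::]).

Lemma size_incs len m a : size (incs len m a) = 'C(len, m).
Proof.
elim: len m a => [|len IH] [|m] a //=.
by rewrite size_cat size_map !IH binS addnC.
Qed.

Lemma mem_map_cons a (b : nat) s L :
  (b :: s \in [seq a :: x | x <- L]) = (b == a) && (s \in L).
Proof.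
apply/mapP/andP => [[x xL [-> ->]] | [/eqP -> sL]]; last by exists s.
by rewrite eqxx.
Qed.

Lemma mem_incs len m a s : (s \in incs len m a) =
  [&& size s == m, sorted ltn s & all (fun i => a <= i < a + len) s].
Proof.
elim: len m a s => [|len IH] [|m] a [|b s] //=.
- rewrite in_nil; symmetry; apply/negbTE/negP => /and4P[_ _ h _]; lia.
- rewrite mem_cat IH /=; apply/negbTE/negP => /orP[/mapP[? _ //] | //].
rewrite mem_cat mem_map_cons !IH /= path_sortedE; last exact: ltn_trans.
rewrite eqSS; apply/idP/idP.
- have widen : forall s, all (fun i => a.+1 <= i < a.+1 + len) s ->
      all (fun i => a <= i < a + len.+1) s.
    by move=> s' al; apply: sub_all al => i; lia.
  case/orP => [/and4P[/eqP -> sz srt al] | /and4P[sz /andP[al1 srt] hb al]].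
  + have h1 : all (ltn a) s by apply: sub_all al => i /=; lia.
    by rewrite sz srt h1 widen //= andbT; lia.
  + by rewrite sz al1 srt widen //= andbT; lia.
- case/and4P => sz /andP[al1 srt] hb al.
  have h : all (fun i => a < i < a.+1 + len) s.
    by apply/allP => i ii; have := allP al i ii; have := allP al1 i ii; lia.
  have [eab|nab] := eqVneq b a; first by subst b; rewrite sz srt h.
  by apply/orP; right; rewrite sz al1 srt h /= andbT; move/eqP: nab; lia.
Qed.

Lemma uniq_incs len m a : uniq (incs len m a).
Proof.
elim: len m a => [|len IH] [|m] a //=.
rewrite cat_uniq IH andbT (map_inj_uniq (fun x y (h : a :: x = a :: y) => congr1 behead h)) IH /=.
apply/hasPn => x; rewrite mem_incs => /and3P[_ _ al]; apply/mapP => -[y _ ex]; subst x.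
by move: al => /= /andP[]; rewrite ltnn.
Qed.

Lemma path_bound M a (s : seq nat) :
  path ltn a s -> all (fun i => i <= M) (a :: s) -> a + size s <= M.
Proof.
elim: s a => [|b s IH] a /=; first by rewrite addn0 andbT.
by move=> /andP[ab pb] /andP[aM al]; have := IH b pb al; lia.
Qed.

Lemma lep_top_segment M (s : seq nat) : sorted ltn s -> all (fun i => i <= M) s ->
  lep s (iota (M.+1 - size s) (size s)).
Proof.
rewrite /lep; elim: s => [|a s IH] //= pth al.
have hb := path_bound pth al.
have -> : (M.+1 - (size s).+1).+1 = M.+1 - size s by lia.
move: al => /= /andP[aM al]; apply/andP; split; first lia.
exact: IH (path_sorted pth) al.
Qed.

Lemma inP_up n k z : inP n k z -> all (fun i => i < n - k) z -> inP n k (map S z).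
Proof.
case=> sz srt al alz; split; first by rewrite size_map.
- by rewrite sorted_map.
- by rewrite all_map; apply: sub_all alz => i /=; lia.
Qed.

Lemma inP_down n k z t : inP n k z -> t < head 0 z -> inP n k (map (subn^~ t) z).
Proof.
case=> sz srt al ht; have hm := head_min srt.
split; first by rewrite size_map.
- apply: (homo_sorted_in (P := fun i => t < i)) srt; last first.
    by apply: sub_all hm => i /=; lia.
  by move=> x y /= hx hy; rewrite /ltn /=; lia.
- rewrite all_map; apply/allP => i ii; have := allP hm i ii; have := allP al i ii.
  by rewrite /=; lia.
Qed.

Lemma Gvec_top n k y : 1 <= k -> 2 * k <= n -> inP n k y -> head 0 y = 1 ->
  lep y (Gvec n k).
Proof.
move=> hk hn [sz srt al]; case: y sz srt al => [|b y] //= sz srt al hb; subst b.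
rewrite /lep /Gvec /=; apply: (_ : lep y (iota (n - 2 * k + 2) (k - 1))).
have -> : n - 2 * k + 2 = (n - k).+1 - size y by lia.
have -> : k - 1 = size y by lia.
apply: lep_top_segment; first exact: path_sorted srt.
by move: al => /= /andP[_]; apply: sub_all => i /andP[].
Qed.

(* the members of P starting at 1 are 1 :: s for (k-1)-subsets s of [2, n-k] *)
Lemma baseP_card n k : 1 <= k -> 2 * k <= n ->
  has_card (fun y => inP n k y /\ head 0 y = 1) 'C(n - k - 1, k - 1).
Proof.
move=> hk hn.
exists (map (cons 1) (incs (n - k - 1) (k - 1) 2)); split; [|split].
- by rewrite (map_inj_uniq (fun x y (h : 1 :: x = 1 :: y) => congr1 behead h)) uniq_incs.
- case=> [|b y].
    by split; [case/mapP | case=> -[/= s0]; lia].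
  rewrite mem_map_cons mem_incs; split.
  + case/andP => /eqP -> /and3P[/eqP sz srt al]; split=> //; split.
    * by rewrite /= sz; lia.
    * rewrite /= path_sortedE ?srt ?andbT; last exact: ltn_trans.
      by apply: sub_all al => i /=; lia.
    * by rewrite /=; apply/andP; split; [lia | apply: sub_all al => i /=; lia].
  + case=> -[sz pth al] /= hb; subst b; rewrite eqxx /=.
    move: pth; rewrite /= path_sortedE; last exact: ltn_trans.
    case/andP => al1 srt; rewrite srt /=; apply/andP; split.
      by apply/eqP; move: sz => /=; lia.
    apply/allP => i ii; have := allP al1 i ii; move: al => /= /andP[_ /allP al].
    by have := al i ii; lia.
- by rewrite size_map size_incs.
Qed.

Notation gap2 := (fun a b : nat => a.+1 < b).

Lemma size_pairs s : size (pairs_of s) = 2 * size s.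
Proof. by elim: s => //= a s IH; rewrite -/(pairs_of s) IH; lia. Qed.

Lemma all_pairs (P : pred nat) s :
  all P (pairs_of s) = all (fun i => P i && P i.+1) s.
Proof. by elim: s => //= a s IH; rewrite -/(pairs_of s) IH !andbA. Qed.

Lemma path_pairs a s : path gap2 a s -> path ltn a.+1 (pairs_of s).
Proof.
elim: s a => //= b s IH a /andP[ab pb]; rewrite -/(pairs_of s).
by rewrite /ltn /= ab ltnSn /=; apply: IH.
Qed.

Lemma sorted_pairs s : sorted gap2 s -> sorted ltn (pairs_of s).
Proof.
by case: s => //= a s pth; rewrite -/(pairs_of s) /ltn /= ltnSn; apply: path_pairs.
Qed.

Lemma map_pairs (f : nat -> nat) s : all (fun i => f i.+1 == (f i).+1) s ->
  map f (pairs_of s) = pairs_of (map f s).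
Proof.
elim: s => //= a s IH /andP[/eqP h hs]; rewrite -/(pairs_of s) -/(pairs_of (map f s)).
by rewrite h IH.
Qed.

Lemma head_pairs s : head 0 (pairs_of s) = head 0 s.
Proof. by case: s. Qed.

Lemma pairs_inj s t : pairs_of s = pairs_of t -> s = t.
Proof. by elim: s t => [|a s IH] [|b t] //= [-> _ /IH ->]. Qed.

Lemma gap2_ltn s : sorted gap2 s -> sorted ltn s.
Proof. by apply: sub_sorted => x y /=; rewrite /ltn /=; lia. Qed.

Lemma inF_shape n k x : inF n k x ->
  [/\ size x = 2 * k, sorted ltn x & all (fun i => 0 < i <= n) x].
Proof.
case=> s [sz srt al ->]; split.
- by rewrite size_pairs sz.
- exact: sorted_pairs.
- by rewrite all_pairs; apply: sub_all al => i /=; lia.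
Qed.

Lemma inF_up n k z : inF n k z -> all (fun i => i < n) z -> inF n k (map S z).
Proof.
case=> s [sz srt al ->] alz; exists (map S s); split.
- by rewrite size_map.
- by rewrite sorted_map.
- by rewrite all_map; move: alz; rewrite all_pairs; apply: sub_all => i /=; lia.
- by rewrite map_pairs //; apply/allP.
Qed.

Lemma inF_down n k z t : inF n k z -> t < head 0 z -> inF n k (map (subn^~ t) z).
Proof.
case=> s [sz srt al ->]; rewrite head_pairs => ht.
have hs : all (fun i => t < i) s by apply: sub_all (head_min (gap2_ltn srt)) => i; lia.
exists (map (subn^~ t) s); split.
- by rewrite size_map.
- apply: (homo_sorted_in (P := fun i => t < i)) srt; last exact: hs.
  by move=> x y /= hx hy; move: hx hy; rewrite /in_mem /=; lia.
- rewrite all_map; apply/allP => i ii; have := allP hs i ii; have := allP al i ii.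
  by rewrite /=; lia.
- by rewrite map_pairs //; apply: sub_all hs => i /= ?; apply/eqP; lia.
Qed.

Lemma topF_top n k y : 1 <= k -> 2 * k <= n -> inF n k y -> head 0 y = 1 ->
  lep y (topF n k).
Proof.
move=> hk hn Fy; have [sz _ _] := inF_shape Fy.
case: Fy sz => s [ss srt al ->]; case: s ss srt al => [|b s] //= ss srt al sz hb.
rewrite -/(pairs_of s) in sz *; subst b; rewrite /lep /topF /=.
apply: (_ : lep (pairs_of s) (iota (n - 2 * k + 3) (2 * k - 2))).
have hsz : size (pairs_of s) = 2 * k - 2 by rewrite size_pairs; lia.
rewrite (_ : n - 2 * k + 3 = n.+1 - size (pairs_of s)); last by lia.
rewrite -hsz; apply: lep_top_segment; first exact: path_sorted (path_pairs srt).
by rewrite all_pairs; move: al => /= /andP[_]; apply: sub_all => i /=; lia.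
Qed.

(* conv c (x_1, ..., x_k) = (x_1 + c, x_2 + c + 1, ..., x_k + c + k - 1) *)
Fixpoint conv (c : nat) (s : seq nat) : seq nat :=
  if s is a :: s' then (a + c) :: conv c.+1 s' else [::].
Fixpoint unconv (c : nat) (s : seq nat) : seq nat :=
  if s is a :: s' then (a - c) :: unconv c.+1 s' else [::].

(* R x = {x_1, x_1 + 1, x_2 + 1, x_2 + 2, ..., x_k + k - 1, x_k + k} *)
Definition toF (x : seq nat) : seq nat := pairs_of (conv 0 x).

Lemma size_conv c s : size (conv c s) = size s.
Proof. by elim: s c => //= a s IH c; rewrite IH. Qed.

Lemma conv_path a c x : path gap2 (a + c) (conv c.+1 x) = path ltn a x.
Proof.
elim: x a c => //= b x IH a c.
by rewrite -(IH b c.+1) addnS; congr andb; rewrite /ltn /=; apply/idP/idP; lia.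
Qed.

Lemma sorted_conv x : sorted gap2 (conv 0 x) = sorted ltn x.
Proof. by case: x => //= a x; rewrite (conv_path a 0). Qed.

Lemma conv_bound M c x : all (fun i => 0 < i <= M) x ->
  all (fun v => 0 < v < M + c + size x) (conv c x).
Proof.
elim: x c => //= a x IH c /andP[ha hx]; apply/andP; split; first lia.
by apply: sub_all (IH c.+1 hx) => v /=; lia.
Qed.

Lemma conv_bound_inv n c x : sorted ltn x -> all (fun v => v < n) (conv c x) ->
  all (fun v => v + c + size x <= n) x.
Proof.
elim: x c => //= a x IH c srt /andP[ha hx].
have hx' := IH c.+1 (path_sorted srt) hx.
apply/andP; split; last by apply: sub_all hx' => v /=; lia.
case: x srt hx hx' {IH} => [|b x] /=; first by lia.
by move=> /andP[ab _] _ /andP[hb _]; move: ab; rewrite /ltn /=; lia.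
Qed.

Lemma conv_unconv_path p c s :
  path gap2 p s -> c <= p -> conv c.+1 (unconv c.+1 s) = s.
Proof.
elim: s p c => //= b s IH p c /andP[pb ps] cp.
by rewrite subnK; [rewrite (IH b c.+1) // | ]; lia.
Qed.

Lemma conv_unconv s : sorted gap2 s -> conv 0 (unconv 0 s) = s.
Proof.
by case: s => //= b s pth; rewrite subn0 addn0 (conv_unconv_path (p := b)).
Qed.

Lemma conv_inj c x y : conv c x = conv c y -> x = y.
Proof.
elim: x y c => [|a x IH] [|b y] c //= [hab e].
by rewrite (IH _ _ e); congr cons; lia.
Qed.

Lemma toF_inj x y : toF x = toF y -> x = y.
Proof. by move/pairs_inj/conv_inj. Qed.

Lemma head_toF x : head 0 (toF x) = head 0 x.
Proof. by case: x => //= a x; rewrite addn0. Qed.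

Lemma inF_toF n k x : inP n k x -> inF n k (toF x).
Proof.
case=> sz srt al.
have kn : k <= n by case: x sz al {srt} => [|a x] /= <- //; case/andP; lia.
exists (conv 0 x); split=> //.
- by rewrite size_conv.
- by rewrite sorted_conv.
- by apply: sub_all (conv_bound 0 al) => v; rewrite sz; lia.
Qed.

Lemma toF_onto n k z : inF n k z -> exists2 x, inP n k x & z = toF x.
Proof.
case=> s [sz srt al ->]; exists (unconv 0 s); last by rewrite /toF conv_unconv.
have cu := conv_unconv srt.
have srtx : sorted ltn (unconv 0 s) by rewrite -sorted_conv cu.
have sx : size (unconv 0 s) = k by rewrite -(size_conv 0) cu.
split=> //; apply/allP => v vx; apply/andP; split.
- have := allP (head_min srtx) v vx; case: s al vx {sz srt cu srtx sx} => [|b s] //=.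
  by case/andP=> /andP[b0 _] _ _; lia.
- have conv_lt : all (fun v => v < n) (conv 0 (unconv 0 s)).
    by rewrite cu; apply: sub_all al => i /andP[].
  by have := allP (conv_bound_inv srtx conv_lt) v vx; rewrite sx; lia.
Qed.

Lemma baseF_card n k : 1 <= k -> 2 * k <= n ->
  has_card (fun y => inF n k y /\ head 0 y = 1) 'C(n - k - 1, k - 1).
Proof.
move=> hk hn; apply: (has_card_rel (R := fun x z => z = toF x)) (baseP_card hk hn).
- by move=> x [Px hx]; exists (toF x) => //; split; [exact: inF_toF | rewrite head_toF].
- by move=> x y y' _ -> ->.
- by move=> x x' y _ _ -> /toF_inj.
- move=> z [Fz hz]; have [x Px ez] := toF_onto Fz.
  by exists x => //; rewrite -head_toF -ez.
Qed.

Lemma subseq_eq_size (s1 s2 : seq nat) : subseq s1 s2 -> size s1 = size s2 -> s1 = s2.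
Proof. by move=> h e; apply/eqP; rewrite -(size_subseq_leqif h).2 e. Qed.

(* all generating facets of B_S have the same size 2k, so none is contained
   in another and the facets of B_S are exactly its generating facets *)
Lemma facet_gen n k S f : facetBS n k S f <-> genBS n k S f.
Proof.
split.
- case=> -[srt [y [gy sfy]]] maximal.
  suff -> : f = y by [].
  apply/esym/maximal => //; split; last by exists y; split=> //; exact: subseq_refl.
  by have [_ ? _] := inF_shape gy.1.1.
- move=> gf; have [sz srt _] := inF_shape gf.1.1.
  split; first by split=> //; exists f; split=> //; exact: subseq_refl.
  move=> g [_ [y [gy sgy]]] sfg.
  have [sy _ _] := inF_shape gy.1.1.
  have fy : f = y := subseq_eq_size (subseq_trans sfg sgy) (etrans sz (esym sy)).
  subst y; apply/esym/(subseq_eq_size sfg).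
  by apply/eqP; rewrite eqn_leq (size_subseq sfg) (size_subseq sgy).
Qed.

Theorem lemma3p13 (n k : nat) (hk : 1 <= k) (hn : 2 * k <= n) :
  (forall S : seq (seq nat), antichainF n k S -> topF n k \in S ->
     has_card (facetBS n k S) 'C(n - k - 1, k - 1)) /\
  (forall A : seq (seq nat), antichainP n k A -> Gvec n k \in A ->
     has_card (fun x => idealP n k A x /\ ~ idealP n k (shift1 A) x)
              'C(n - k - 1, k - 1) /\
     has_card (idealP n k [:: Gvec n k]) 'C(n - k - 1, k - 1)).
Proof.
have k2_gt0 : 0 < 2 * k by lia.
split.
- move=> S [SF _] TS; apply: (has_card_ext (P := genBS n k S)).
    by move=> x; rewrite facet_gen.
  apply: (count_generating k2_gt0 (@inF_shape n k) (@inF_up n k) (@inF_down n k)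
            (fun y => topF_top hk hn) SF TS (baseF_card hk hn)).
- move=> A [AP _] GA; split.
    exact: (count_generating hk (fun x (Px : inP n k x) => Px) (@inP_up n k)
              (@inP_down n k) (fun y => Gvec_top hk hn) AP GA (baseP_card hk hn)).
  (* the ideal of G consists of the members of P starting at 1 *)
  apply: (has_card_ext _ (baseP_card hk hn)) => x; split.
  + by case=> Px hx; split=> //; exists (Gvec n k); [rewrite inE | exact: Gvec_top].
  + case=> -[sz srt al] [y]; rewrite inE => /eqP -> /lep_head le; split=> //.
    case: x sz srt al le => [|a x] /= sz; first by move: hk; rewrite -sz.
    by move=> _ /andP[/andP[a0 _] _] a1; apply/eqP; rewrite eqn_leq a0 a1.
Qed.
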